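(* For arbitrary natural numbers $k,\ell\geq 2$ there exist a finite alphabet $A$, a letter $a\in A$, and languages $K,L\subseteq A^*$ whose minimal complete deterministic finite automata have $k$ and $\ell$ states, respectively, such that every complete deterministic finite automaton recognizing the language $KaL=\{\,uav\mid u\in K,\ v\in L\,\}$ has at least $k2^\ell$ states. *)

From mathcomp Require Import all_boot.
Set Implicit Arguments. Unset Strict Implicit. Unset Printing Implicit Defensive.

Record dfa (A : finType) := DFA {
  dfa_state : finType;
  dfa_init : dfa_state;
  dfa_trans : dfa_state -> A -> dfa_state;
  dfa_accept : pred dfa_state }.

Definition lang (A : finType) := seq A -> Prop.

Definition dfa_accepts (A : finType) (M : dfa A) (w : seq A) : bool :=
  @dfa_accept A M (foldl (@dfa_trans A M) (@dfa_init A M) w).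

Definition recognizes (A : finType) (M : dfa A) (L : lang A) : Prop :=
  forall w, dfa_accepts M w <-> L w.

Definition minimal_dfa_size (A : finType) (L : lang A) (n : nat) : Prop :=
  (exists M : dfa A, recognizes M L /\ #|dfa_state M| = n) /\
  (forall M : dfa A, recognizes M L -> n <= #|dfa_state M|).

Definition concat_letter (A : finType) (K : lang A) (a : A) (L : lang A) : lang A :=
  fun w => exists u v, w = u ++ a :: v /\ K u /\ L v.

From mathcomp Require Import all_boot.

Set Implicit Arguments. Unset Strict Implicit. Unset Printing Implicit Defensive.

(* Take as alphabet all pairs (f, g) of transformations of the state sets
   [Q_K] and [Q_L] of two automata that run in parallel, plus the separator
   [a = None], which acts trivially on both.  The subset construction for
   [K a L] has states [(p, S)] with [p] in [Q_K] and [S] a subset of [Q_L];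
   with this much freedom every such pair is reachable and any two of them are
   separated by a word of length at most two, so [K a L] needs [k 2^l]
   states. *)

Lemma rcons_eq_cat_cons (T : Type) (w u v : seq T) x y :
  rcons w x = u ++ y :: v ->
  [/\ v = [::], u = w & y = x] \/ exists v', v = rcons v' x /\ w = u ++ y :: v'.
Proof.
case/lastP: v => [|v z]; first by rewrite cats1 => /rcons_inj[-> ->]; left.
by rewrite -rcons_cons -rcons_cat => /rcons_inj[-> ->]; right; exists v.
Qed.

Lemma card_set (T : finType) : #|{: {set T}}| = 2 ^ #|T|.
Proof. by rewrite -[LHS]cardsT -powersetT card_powerset cardsT. Qed.

Section DfaLowerBound.
Variable A : finType.
Implicit Types (M N : dfa A) (X : lang A).

Definition run_from M (q : dfa_state M) (w : seq A) : dfa_state M :=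
  foldl (@dfa_trans A M) q w.

Definition language M : lang A := fun w => dfa_accepts M w.

Definition reachable M := forall q, exists w, run_from (dfa_init M) w = q.

Definition reduced M := forall q q' : dfa_state M, q != q' ->
  exists z, dfa_accept (run_from q z) != dfa_accept (run_from q' z).

Lemma run_from_cat M (q : dfa_state M) u v :
  run_from q (u ++ v) = run_from (run_from q u) v.
Proof. exact: foldl_cat. Qed.

Lemma run_from_rcons M (q : dfa_state M) w x :
  run_from q (rcons w x) = dfa_trans (run_from q w) x.
Proof. exact: foldl_rcons. Qed.

Lemma dfa_acceptsE M w : dfa_accepts M w = dfa_accept (run_from (dfa_init M) w).
Proof. by []. Qed.

Lemma recognizes_language M : recognizes M (language M).
Proof. by []. Qed.

Lemma leq_card_dfa_states (I : finType) (w : I -> seq A) X N :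
  recognizes N X ->
  (forall i j, i != j -> exists z, ~ (X (w i ++ z) <-> X (w j ++ z))) ->
  #|I| <= #|dfa_state N|.
Proof.
move=> recN sep_w; pose q i := run_from (dfa_init N) (w i).
suff /leq_card : injective q by [].
move=> i j eq_q; case: (eqVneq i j) => // /sep_w[z]; case.
have eq_acc : dfa_accepts N (w i ++ z) = dfa_accepts N (w j ++ z).
  by rewrite !dfa_acceptsE !run_from_cat -/(q i) eq_q.
by split=> /recN acc; apply/recN; rewrite ?eq_acc // -eq_acc.
Qed.

Lemma minimal_dfa_size_reduced M X :
  recognizes M X -> reachable M -> reduced M -> minimal_dfa_size X #|dfa_state M|.
Proof.
move=> recM reachM redM; split; first by exists M.
move=> N recN.
have reach_word q : exists w, run_from (dfa_init M) w == q.
  by have [w <-] := reachM q; exists w.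
pose word q := xchoose (reach_word q).
apply: (leq_card_dfa_states (w := word) recN) => q q' /redM[z acc_z]; exists z.
have acc_word r : dfa_accepts M (word r ++ z) = dfa_accept (run_from r z).
  by rewrite dfa_acceptsE run_from_cat (eqP (xchooseP (reach_word r))).
move=> eq_X; move/negP: acc_z; apply.
by apply/eqP; apply/idP/idP; rewrite -!acc_word => /recM/eq_X/recM.
Qed.

End DfaLowerBound.

Arguments run_from : simpl never.

Section ConcatLetter.
Variables (A : finType) (MK ML : dfa A) (a : A).
Local Notation QK := (dfa_state MK).
Local Notation QL := (dfa_state ML).

Definition concat_trans (c : QK * {set QL}) (x : A) : QK * {set QL} :=
  (dfa_trans c.1 x,
   [set dfa_trans s x | s in c.2] :|:
     (if (x == a) && dfa_accept c.1 then [set dfa_init ML] else set0)).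

Definition concat_dfa : dfa A :=
  DFA (dfa_init MK, set0) concat_trans (fun c => [exists s in c.2, dfa_accept s]).

Lemma run_concat_dfa_fst w :
  (run_from (dfa_init concat_dfa) w).1 = run_from (dfa_init MK) w.
Proof. by elim/last_ind: w => [|w x IH] //; rewrite !run_from_rcons /= IH. Qed.

Lemma mem_run_concat_dfa w s :
  s \in (run_from (dfa_init concat_dfa) w).2 <->
  exists u v,
    [/\ w = u ++ a :: v, dfa_accepts MK u & run_from (dfa_init ML) v = s].
Proof.
elim/last_ind: w s => [|w x IH] s.
  by rewrite inE; split=> // -[[|? ?] [? []]].
rewrite run_from_rcons /= inE run_concat_dfa_fst; split.
- case/orP => [/imsetP[s' /IH[u [v [-> acc_u <-]]] ->] | ].
    by exists u, (rcons v x); rewrite rcons_cat rcons_cons run_from_rcons.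
  case: ifP => [/andP[/eqP -> acc_w] | _]; rewrite inE // => /eqP ->.
  by exists w, [::]; rewrite cats1.
- move=> [u [v [eq_w acc_u <-]]].
  have [[-> <- ->] | [v' [-> eq_w']]] := rcons_eq_cat_cons eq_w.
    by rewrite eqxx -dfa_acceptsE acc_u inE eqxx orbT.
  rewrite run_from_rcons; apply/orP; left; apply: imset_f.
  by apply/IH; exists u, v'.
Qed.

Lemma concat_dfa_recognizes K L : recognizes MK K -> recognizes ML L ->
  recognizes concat_dfa (concat_letter K a L).
Proof.
move=> recK recL w; rewrite dfa_acceptsE; split.
  case/existsP => s /andP[/mem_run_concat_dfa[u [v [-> acc_u run_v]]] acc_s].
  exists u, v; split=> //; split; first exact/recK.
  by apply/recL; rewrite dfa_acceptsE run_v.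
move=> [u [v [-> [Ku Lv]]]]; apply/existsP; exists (run_from (dfa_init ML) v).
rewrite -dfa_acceptsE (recL v).2 // andbT; apply/mem_run_concat_dfa.
by exists u, v; split=> //; apply/recK.
Qed.

End ConcatLetter.

Section TransformationDfa.
Variable n : nat.
Local Notation Q := 'I_n.+2.

Definition idf : {ffun Q -> Q} := [ffun q => q].
Definition constf (q : Q) : {ffun Q -> Q} := [ffun => q].
Definition probe (q : Q) : {ffun Q -> Q} :=
  [ffun r => if r == q then ord0 else ord_max].

Lemma imset_idf (S : {set Q}) : [set idf s | s in S] = S.
Proof. by rewrite -[RHS]imset_id; apply: eq_imset => s; rewrite ffunE. Qed.

Lemma probe_eq0 (q r : Q) : (probe q r == ord0) = (r == q).
Proof. by rewrite ffunE; case: (r == q). Qed.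

Lemma mem0_imset_probe (q : Q) (S : {set Q}) :
  (ord0 \in [set probe q s | s in S]) = (q \in S).
Proof.
apply/imsetP/idP => [[s Ss /eqP] | Sq]; last by exists q; rewrite // ffunE eqxx.
by rewrite eq_sym probe_eq0 => /eqP <-.
Qed.

Lemma notin0_imset_constf (S : {set Q}) :
  ord0 \notin [set constf ord_max s | s in S].
Proof. by apply/imsetP => -[s _]; rewrite ffunE. Qed.

Variables (A : finType) (act : A -> {ffun Q -> Q}).

Definition transformation_dfa : dfa A :=
  DFA ord0 (fun q x => act x q) (pred1 ord0).

Hypotheses (act_constf : forall q, exists x, act x = constf q)
           (act_probe : forall q, exists x, act x = probe q).

Lemma transformation_dfa_minimal :
  minimal_dfa_size (language transformation_dfa) n.+2.
Proof.
rewrite -[X in minimal_dfa_size _ X](card_ord n.+2).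
apply: minimal_dfa_size_reduced (recognizes_language _) _ _ => [q | q q' neq_qq'].
  have [x act_x] := act_constf q; exists [:: x].
  by rewrite /run_from /= act_x ffunE.
have [x act_x] := act_probe q; exists [:: x].
by rewrite /run_from /= act_x !probe_eq0 eqxx (eq_sym q') (negbTE neq_qq').
Qed.

End TransformationDfa.

Section Witness.
Variables k l : nat.
Local Notation alphabet :=
  (option ({ffun 'I_k.+2 -> 'I_k.+2} * {ffun 'I_l.+2 -> 'I_l.+2})).

Definition dfaK : dfa alphabet :=
  transformation_dfa (fun x => if x is Some (f, _) then f else idf k).
Definition dfaL : dfa alphabet :=
  transformation_dfa (fun x => if x is Some (_, g) then g else idf l).
Definition dfaKaL : dfa alphabet := concat_dfa dfaK dfaL None.

Lemma dfaK_minimal : minimal_dfa_size (language dfaK) k.+2.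
Proof.
apply: transformation_dfa_minimal => q.
  by exists (Some (constf q, idf l)).
by exists (Some (probe q, idf l)).
Qed.

Lemma dfaL_minimal : minimal_dfa_size (language dfaL) l.+2.
Proof.
apply: transformation_dfa_minimal => q.
  by exists (Some (idf k, constf q)).
by exists (Some (idf k, probe q)).
Qed.

Lemma dfaKaL_accept c : dfa_accept (c : dfa_state dfaKaL) = (ord0 \in c.2).
Proof.
apply/existsP/idP => [[s /andP[Ss /eqP <-]] | S0] //.
by exists ord0; rewrite S0.
Qed.

Lemma run_dfaKaL_Some p S f g w :
  run_from ((p, S) : dfa_state dfaKaL) (Some (f, g) :: w) =
  run_from ((f p, [set g s | s in S]) : dfa_state dfaKaL) w.
Proof. by rewrite /run_from /=; congr foldl; rewrite /concat_trans /= setU0. Qed.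

Lemma run_dfaKaL_None p S w :
  run_from ((p, S) : dfa_state dfaKaL) (None :: w) =
  run_from ((p, if p == ord0 then ord0 |: S else S) : dfa_state dfaKaL) w.
Proof.
rewrite /run_from /=; congr foldl; rewrite /concat_trans /= imset_idf ffunE setUC.
by case: (p == ord0); rewrite ?set0U.
Qed.

Lemma dfaKaL_reduced : reduced dfaKaL.
Proof.
move=> [p S] [p' S'] neq_c.
have [eq_S | neq_S] := eqVneq S S'.
  have neq_p : p != p' by apply: contraNneq neq_c => ->; rewrite eq_S.
  (* Clear [ord0] from the set component and send only [p] to the accepting
     state of [dfaK]; then [a] restores [ord0] exactly when we started at [p]. *)
  exists [:: Some (probe p, constf ord_max); None].
  rewrite !dfaKaL_accept !run_dfaKaL_Some !run_dfaKaL_None !probe_eq0 eqxx.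
  rewrite (eq_sym p') (negbTE neq_p) /= setU11 -eq_S.
  by rewrite (negbTE (notin0_imset_constf _)).
have [s diff_s] : exists s, (s \in S) != (s \in S').
  apply/existsP; apply: contraR neq_S => /existsPn same; apply/eqP/setP => s.
  exact/eqP/negPn/same.
exists [:: Some (idf k, probe s)].
by rewrite !dfaKaL_accept !run_dfaKaL_Some /= !mem0_imset_probe.
Qed.

Definition move0 (j : 'I_l.+2) : {ffun 'I_l.+2 -> 'I_l.+2} :=
  [ffun q => if q == ord0 then j else q].

Lemma imset_move0 j (T : {set 'I_l.+2}) : ord0 \notin T ->
  [set move0 j s | s in ord0 |: T] = j |: T.
Proof.
move=> T0; rewrite imsetU1 ffunE eqxx; congr setU.
rewrite -[RHS]imset_id; apply: eq_in_imset => s Ts; rewrite ffunE.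
by case: eqP => // s0; rewrite -s0 Ts in T0.
Qed.

(* While the [dfaK]-component sits at its accepting state [ord0], each [j] is
   added by reading [a], which starts [dfaL] afresh at [ord0], and then moving
   that copy to [j].  [reach_word] adds [ord0] last, and finally moves the
   [dfaK]-component to the target without disturbing the set. *)
Fixpoint insert_word (s : seq 'I_l.+2) : seq alphabet :=
  if s is j :: s' then None :: Some (idf k, move0 j) :: insert_word s' else [::].

Lemma run_insert_word s (T : {set 'I_l.+2}) : ord0 \notin T -> ord0 \notin s ->
  run_from ((ord0, T) : dfa_state dfaKaL) (insert_word s) =
  (ord0, T :|: [set x in s]).
Proof.
elim: s T => [|j s IH] T T0.
  by move=> _; congr pair; apply/setP => x; rewrite !inE orbF.
rewrite inE negb_or => /andP[j0 s0] /=.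
rewrite run_dfaKaL_None eqxx run_dfaKaL_Some ffunE imset_move0 // IH //.
  by rewrite set_cons setUCA setUA.
by rewrite !inE negb_or j0.
Qed.

Definition reach_word (c : 'I_k.+2 * {set 'I_l.+2}) : seq alphabet :=
  insert_word (enum (c.2 :\ ord0)) ++ (if ord0 \in c.2 then [:: None] else [::])
  ++ [:: Some (constf c.1, idf l)].

Lemma dfaKaL_reachable : reachable dfaKaL.
Proof.
move=> [p S]; exists (reach_word (p, S)).
rewrite !run_from_cat run_insert_word ?inE ?mem_enum ?inE ?eqxx //.
have -> : set0 :|: [set x in enum (S :\ ord0)] = S :\ ord0.
  by apply/setP => x; rewrite !inE mem_enum !inE.
case: ifP => S0; rewrite ?run_dfaKaL_None ?eqxx run_dfaKaL_Some ffunE imset_idf.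
  by rewrite setD1K.
rewrite /run_from /=; congr pair; apply/setP => x; rewrite !inE.
by case: eqP => // ->; rewrite S0.
Qed.

End Witness.

Theorem proposition2 (k l : nat) (hk : 2 <= k) (hl : 2 <= l) :
  exists (A : finType) (a : A) (K L : lang A),
    minimal_dfa_size K k /\ minimal_dfa_size L l /\
    forall M : dfa A, recognizes M (concat_letter K a L) ->
      k * 2 ^ l <= #|dfa_state M|.
Proof.
case: k hk => [|[|k]] // _; case: l hl => [|[|l]] // _.
exists _, None, (language (dfaK k l)), (language (dfaL k l)).
split; first exact: dfaK_minimal.
split; first exact: dfaL_minimal.
have recKaL := concat_dfa_recognizes None (recognizes_language (dfaK k l))
                                         (recognizes_language (dfaL k l)).
have [_ minKaL] :=
  minimal_dfa_size_reduced recKaL (@dfaKaL_reachable k l) (@dfaKaL_reduced k l).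
by move=> M /minKaL; rewrite card_prod card_set !card_ord.
Qed.
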